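(* Let $G$ be an open localic groupoid. Then its associated quantale $\mathcal O(G)$, with the structure described in the context, is a groupoid quantale over the base locale $\mathcal O(G_0)$.
   Context: A localic groupoid $G$ has locales $G_0$ (objects), $G_1$ (arrows), maps $d,r:G_1\to G_0$, $u:G_0\to G_1$, $i:G_1\to G_1$, $m:G_2\to G_1$ where $G_2$ is the pullback of $r$ and $d$; it is open if $d$ is an open map of locales (then $m$ is open). $\mathcal O(G)$ is the frame $\mathcal O(G_1)$ with multiplication given by the composite $\mathcal O(G_1)\otimes\mathcal O(G_1)\to\mathcal O(G_2)\xrightarrow{m_!}\mathcal O(G_1)$, involution $q^*=i_!(q)=i^*(q)$, actions of $A=\mathcal O(G_0)$ given by $a\triangleright q=d^*(a)\wedge q$ and $q\triangleleft a=r^*(a)\wedge q$, support $\varsigma=d_!$ and $\upsilon=u^*$. Definitions: for a locale $A$, an $A$-$A$-bimodule is a sup-lattice $M$ with actions $a\triangleright m$, $m\triangleleft a$ preserving joins in each variable with $1_A\triangleright m=m$, $(a\wedge b)\triangleright m=a\triangleright(b\triangleright m)$, $m\triangleleft1_A=m$, $m\triangleleft(a\wedge b)=(m\triangleleft a)\triangleleft b$, $(a\triangleright m)\triangleleft b=a\triangleright(m\triangleleft b)$. An $A$-$A$-quantale is such a $Q$ with associative join-preserving multiplication and $(a\triangleright x)y=a\triangleright(xy)$, $(x\triangleleft a)y=x(a\triangleright y)$, $(xy)\triangleleft a=x(y\triangleleft a)$; involutive if there is a join-preserving $x\mapsto x^*$ with $x^{**}=x$, $(xy)^*=y^*x^*$,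 $(a\triangleright(x\triangleleft b))^*=b\triangleright(x^*\triangleleft a)$. $1_Q$ is the top. A support is a join-preserving $\varsigma:Q\to A$ with $\varsigma(1_Q)=1_A$, $\varsigma(x)\triangleright y\le xx^*y$, $\varsigma(x)\triangleright x=x$; equivariant if $\varsigma(a\triangleright x)=a\wedge\varsigma(x)$. A based quantal frame is an involutive $A$-$A$-quantale that is a frame with $(a\triangleright x)\wedge y=a\triangleright(x\wedge y)$, $(x\triangleleft a)\wedge y=(x\wedge y)\triangleleft a$; reflexive means a frame homomorphism $\upsilon:Q\to A$ with $\upsilon(a\triangleright1_Q)=a=\upsilon(1_Q\triangleleft a)$. $Q\otimes_AQ$ is $Q\otimes Q$ modulo $x\otimes(a\triangleright y)=(x\triangleleft a)\otimes y$, $\mu_A:Q\otimes_AQ\to Q$ the induced multiplication; multiplicative means the right adjoint of $\mu_A$ preserves joins. Unit laws: $\bigvee_{xy\le a}\upsilon(x)\triangleright y=a$ for all $a$; inverse law: $\upsilon(a)\triangleright1_Q=\bigvee_{xy^*\le a}x\wedge y$ for all $a$. A groupoid quantale is a multiplicative, equivariantly supported, reflexive based quantal frame satisfying the unit laws and the inverse law. *)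

Definition img {X Y : Type} (f : X -> Y) (S : X -> Prop) : Y -> Prop :=
  fun y => exists x, S x /\ y = f x.

Record Frame := {
  fcar :> Type;
  fle : fcar -> fcar -> Prop;
  fsup : (fcar -> Prop) -> fcar;
  fmeet : fcar -> fcar -> fcar;
  ftop : fcar;
  fle_refl : forall x, fle x x;
  fle_trans : forall x y z, fle x y -> fle y z -> fle x z;
  fle_antisym : forall x y, fle x y -> fle y x -> x = y;
  fsup_ub : forall S x, S x -> fle x (fsup S);
  fsup_lub : forall S y, (forall x, S x -> fle x y) -> fle (fsup S) y;
  fmeet_lb1 : forall x y, fle (fmeet x y) x;
  fmeet_lb2 : forall x y, fle (fmeet x y) y;
  fmeet_glb : forall x y z, fle z x -> fle z y -> fle z (fmeet x y);
  ftop_max : forall x, fle x ftop;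
  fdistr : forall x S, fmeet x (fsup S) = fsup (img (fmeet x) S)
}.

Arguments fle {f} _ _.
Arguments fsup {f} _.
Arguments fmeet {f} _ _.
Arguments ftop {f}.

Definition finf {F : Frame} (S : F -> Prop) : F :=
  fsup (fun z => forall s, S s -> fle z s).

Definition frame_hom {A B : Frame} (f : A -> B) : Prop :=
  f ftop = ftop /\
  (forall x y, f (fmeet x y) = fmeet (f x) (f y)) /\
  (forall S, f (fsup S) = fsup (img f S)).

(* A locale map f : X -> Y is given by its inverse image f^* : O(Y) -> O(X).
   Its direct image f_! is the left adjoint of f^* (the formula below is the
   left adjoint whenever one exists). *)
Definition left_adj {A B : Frame} (fstar : A -> B) (x : B) : A :=
  finf (fun y => fle x (fstar y)).

Definition open_map {A B : Frame} (fstar : A -> B) : Prop :=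
  (forall x y, fle (left_adj fstar x) y <-> fle x (fstar y)) /\
  (forall x y, left_adj fstar (fmeet x (fstar y)) = fmeet (left_adj fstar x) y).

(* P (with p1, p2) is the pushout of frames of f and g, i.e. the locale P is
   the pullback of the locale maps corresponding to f and g. *)
Definition is_pushout {X Y Z P : Frame} (f : X -> Y) (g : X -> Z)
    (p1 : Y -> P) (p2 : Z -> P) : Prop :=
  frame_hom p1 /\ frame_hom p2 /\ (forall x, p1 (f x) = p2 (g x)) /\
  forall (F : Frame) (h1 : Y -> F) (h2 : Z -> F),
    frame_hom h1 -> frame_hom h2 -> (forall x, h1 (f x) = h2 (g x)) ->
    exists h : P -> F, frame_hom h /\ (forall y, h (p1 y) = h1 y) /\
      (forall z, h (p2 z) = h2 z) /\
      forall h' : P -> F, frame_hom h' -> (forall y, h' (p1 y) = h1 y) ->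
        (forall z, h' (p2 z) = h2 z) -> forall w, h' w = h w.

(* Data of a localic groupoid, given by the inverse-image frame homs.
   G2 is the pullback of r and d with projections pi1, pi2 (pi1 = first
   arrow, pi2 = second arrow, r pi1 = d pi2).  *)
Record LGData := {
  G0 : Frame; G1 : Frame; G2 : Frame;
  dst : G0 -> G1;
  rst : G0 -> G1;
  ust : G1 -> G0;
  ist : G1 -> G1;
  mst : G1 -> G2;
  pi1 : G1 -> G2;
  pi2 : G1 -> G2
}.

Definition is_localic_groupoid (G : LGData) : Prop :=
  frame_hom (dst G) /\ frame_hom (rst G) /\ frame_hom (ust G) /\
  frame_hom (ist G) /\ frame_hom (mst G) /\
  is_pushout (rst G) (dst G) (pi1 G) (pi2 G) /\
  (forall a, ust G (dst G a) = a) /\ (forall a, ust G (rst G a) = a) /\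
  (forall a, mst G (dst G a) = pi1 G (dst G a)) /\
  (forall a, mst G (rst G a) = pi2 G (rst G a)) /\
  (forall a, ist G (dst G a) = rst G a) /\ (forall a, ist G (rst G a) = dst G a) /\
  (* unit laws: m <u d, 1> = 1 and m <1, u r> = 1 *)
  (forall h : G2 G -> G1 G, frame_hom h ->
     (forall x, h (pi1 G x) = dst G (ust G x)) -> (forall x, h (pi2 G x) = x) ->
     forall x, h (mst G x) = x) /\
  (forall h : G2 G -> G1 G, frame_hom h ->
     (forall x, h (pi1 G x) = x) -> (forall x, h (pi2 G x) = rst G (ust G x)) ->
     forall x, h (mst G x) = x) /\
  (* inverse laws: m <1, i> = u d and m <i, 1> = u r *)
  (forall h : G2 G -> G1 G, frame_hom h ->
     (forall x, h (pi1 G x) = x) -> (forall x, h (pi2 G x) = ist G x) ->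
     forall x, h (mst G x) = dst G (ust G x)) /\
  (forall h : G2 G -> G1 G, frame_hom h ->
     (forall x, h (pi1 G x) = ist G x) -> (forall x, h (pi2 G x) = x) ->
     forall x, h (mst G x) = rst G (ust G x)) /\
  (* associativity, on generalized elements (equivalently, on G3) *)
  (forall (F : Frame) (g1 g2 g3 : G1 G -> F),
     frame_hom g1 -> frame_hom g2 -> frame_hom g3 ->
     (forall a, g1 (rst G a) = g2 (dst G a)) ->
     (forall a, g2 (rst G a) = g3 (dst G a)) ->
     forall h12 h23 k l : G2 G -> F,
       frame_hom h12 -> frame_hom h23 -> frame_hom k -> frame_hom l ->
       (forall x, h12 (pi1 G x) = g1 x) -> (forall x, h12 (pi2 G x) = g2 x) ->
       (forall x, h23 (pi1 G x) = g2 x) -> (forall x, h23 (pi2 G x) = g3 x) ->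
       (forall x, k (pi1 G x) = h12 (mst G x)) -> (forall x, k (pi2 G x) = g3 x) ->
       (forall x, l (pi1 G x) = g1 x) -> (forall x, l (pi2 G x) = h23 (mst G x)) ->
       forall x, k (mst G x) = l (mst G x)).

Definition open_groupoid (G : LGData) : Prop :=
  is_localic_groupoid G /\ open_map (dst G).

Definition OG_mul (G : LGData) (x y : G1 G) : G1 G :=
  left_adj (mst G) (fmeet (pi1 G x) (pi2 G y)).
Definition OG_inv (G : LGData) (x : G1 G) : G1 G := ist G x.
Definition OG_actL (G : LGData) (a : G0 G) (q : G1 G) : G1 G := fmeet (dst G a) q.
Definition OG_actR (G : LGData) (q : G1 G) (a : G0 G) : G1 G := fmeet (rst G a) q.
Definition OG_supp (G : LGData) (q : G1 G) : G0 G := left_adj (dst G) q.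
Definition OG_ups (G : LGData) (q : G1 G) : G0 G := ust G q.

Section GQ.
Variables (A Q : Frame)
  (mul : Q -> Q -> Q) (inv : Q -> Q)
  (actL : A -> Q -> Q) (actR : Q -> A -> Q)
  (supp : Q -> A) (ups : Q -> A).

Definition is_bimodule : Prop :=
  (forall a S, actL a (fsup S) = fsup (img (actL a) S)) /\
  (forall S q, actL (fsup S) q = fsup (img (fun a => actL a q) S)) /\
  (forall q S, actR q (fsup S) = fsup (img (actR q) S)) /\
  (forall S a, actR (fsup S) a = fsup (img (fun q => actR q a) S)) /\
  (forall m, actL ftop m = m) /\
  (forall a b m, actL (fmeet a b) m = actL a (actL b m)) /\
  (forall m, actR m ftop = m) /\
  (forall a b m, actR m (fmeet a b) = actR (actR m a) b) /\
  (forall a b m, actR (actL a m) b = actL a (actR m b)).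

Definition is_AA_quantale : Prop :=
  is_bimodule /\
  (forall x y z, mul (mul x y) z = mul x (mul y z)) /\
  (forall S y, mul (fsup S) y = fsup (img (fun x => mul x y) S)) /\
  (forall x S, mul x (fsup S) = fsup (img (mul x) S)) /\
  (forall a x y, mul (actL a x) y = actL a (mul x y)) /\
  (forall a x y, mul (actR x a) y = mul x (actL a y)) /\
  (forall a x y, actR (mul x y) a = mul x (actR y a)).

Definition is_involutive : Prop :=
  (forall S, inv (fsup S) = fsup (img inv S)) /\
  (forall x, inv (inv x) = x) /\
  (forall x y, inv (mul x y) = mul (inv y) (inv x)) /\
  (forall a b x, inv (actL a (actR x b)) = actL b (actR (inv x) a)).

Definition is_support : Prop :=
  (forall S, supp (fsup S) = fsup (img supp S)) /\
  supp ftop = ftop /\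
  (forall x y, fle (actL (supp x) y) (mul (mul x (inv x)) y)) /\
  (forall x, actL (supp x) x = x).

Definition is_equivariant_support : Prop :=
  is_support /\ forall a x, supp (actL a x) = fmeet a (supp x).

(* Q is a frame by construction (Q : Frame) *)
Definition is_based_quantal_frame : Prop :=
  is_AA_quantale /\ is_involutive /\
  (forall a x y, fmeet (actL a x) y = actL a (fmeet x y)) /\
  (forall a x y, fmeet (actR x a) y = actR (fmeet x y) a).

Definition is_reflexive : Prop :=
  frame_hom ups /\ forall a, ups (actL a ftop) = a /\ ups (actR ftop a) = a.

(* Q (x)_A Q as the sup-lattice of subsets of Q x Q that are down-closed,
   closed under joins in each variable, and saturated for the relation
   x (x) (a |> y) = (x <| a) (x) y; ordered by inclusion. *)
Definition tclosed (S : Q -> Q -> Prop) : Prop :=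
  (forall x y x' y', S x y -> fle x' x -> fle y' y -> S x' y') /\
  (forall X y, (forall x, X x -> S x y) -> S (fsup X) y) /\
  (forall x Y, (forall y, Y y -> S x y) -> S x (fsup Y)) /\
  (forall x a y, S x (actL a y) <-> S (actR x a) y).

Definition tjoin (Fam : (Q -> Q -> Prop) -> Prop) : Q -> Q -> Prop :=
  fun x y => forall T, tclosed T ->
    (forall S, Fam S -> forall x' y', S x' y' -> T x' y') -> T x y.

Definition muA (S : Q -> Q -> Prop) : Q :=
  fsup (fun z => exists x y, S x y /\ z = mul x y).

Definition muA_radj (z : Q) : Q -> Q -> Prop :=
  tjoin (fun S => tclosed S /\ fle (muA S) z).

Definition is_multiplicative : Prop :=
  forall Z : Q -> Prop, forall x y,
    muA_radj (fsup Z) x y <->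
    tjoin (fun S => exists z, Z z /\ S = muA_radj z) x y.

Definition unit_laws : Prop :=
  forall a : Q,
    fsup (fun w => exists x y, fle (mul x y) a /\ w = actL (ups x) y) = a.

Definition inverse_law : Prop :=
  forall a : Q,
    actL (ups a) ftop = fsup (fun w => exists x y, fle (mul x (inv y)) a /\ w = fmeet x y).

Definition is_groupoid_quantale : Prop :=
  is_multiplicative /\ is_equivariant_support /\ is_reflexive /\
  is_based_quantal_frame /\ unit_laws /\ inverse_law.

End GQ.

(* The multiplication of O(G) is x y = m_!(pi1^* x /\ pi2^* y), so everything hinges on m
   being open.  The shear map (g, h) |-> (g, g h) identifies composable pairs with pairs of
   arrows sharing their domain, and turns m into the base change of the open map d along d;
   base change preserves open maps, so m_! exists and satisfies Frobenius reciprocity, which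
   gives the join and module laws.  Associativity follows from the Beck-Chevalley condition
   for the base change of m to composable triples together with associativity of m; the
   involution, unit and inverse laws are the groupoid identities for the generic composable
   pair (pi1, pi2).  Pushouts of frames are presented concretely by balanced relations, which
   decomposes every open of G2 into basic opens pi1^* x /\ pi2^* y: this is what the unit,
   inverse and multiplicativity laws rest on. *)

From Stdlib Require Import FunctionalExtensionality PropExtensionality ProofIrrelevance.
From Stdlib Require Import ClassicalEpsilon.

Set Implicit Arguments.
Unset Strict Implicit.

Arguments fle_refl {f} x.
Arguments fle_trans {f} x y z.
Arguments fle_antisym {f} x y.
Arguments fsup_ub {f} S x.
Arguments fsup_lub {f} S y.
Arguments fmeet_lb1 {f} x y.
Arguments fmeet_lb2 {f} x y.
Arguments fmeet_glb {f} x y z.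
Arguments ftop_max {f} x.
Arguments fdistr {f} x S.

(** * Frames and their homomorphisms *)

Lemma leIxl {F : Frame} (x y z : F) : fle x z -> fle (fmeet x y) z.
Proof. apply fle_trans, fmeet_lb1. Qed.

Lemma leIxr {F : Frame} (x y z : F) : fle y z -> fle (fmeet x y) z.
Proof. apply fle_trans, fmeet_lb2. Qed.

Ltac le_meet_leaf :=
  first [ apply fle_refl | apply ftop_max
        | apply leIxl; le_meet_leaf | apply leIxr; le_meet_leaf ].
Ltac meet_le_ac := repeat apply fmeet_glb; le_meet_leaf.
Ltac meet_ac := apply fle_antisym; meet_le_ac.

Lemma meetC {F : Frame} (x y : F) : fmeet x y = fmeet y x.
Proof. meet_ac. Qed.

Lemma meetA {F : Frame} (x y z : F) : fmeet x (fmeet y z) = fmeet (fmeet x y) z.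
Proof. meet_ac. Qed.

Lemma meetx1 {F : Frame} (x : F) : fmeet x ftop = x.
Proof. meet_ac. Qed.

Lemma meet1x {F : Frame} (x : F) : fmeet ftop x = x.
Proof. meet_ac. Qed.

Lemma meetxx {F : Frame} (x : F) : fmeet x x = x.
Proof. meet_ac. Qed.

Lemma leI2 {F : Frame} (x y x' y' : F) :
  fle x x' -> fle y y' -> fle (fmeet x y) (fmeet x' y').
Proof. intros; apply fmeet_glb; [apply leIxl | apply leIxr]; auto. Qed.

Lemma meet_l {F : Frame} (x y : F) : fle x y -> fmeet x y = x.
Proof. intros; apply fle_antisym; [apply fmeet_lb1 | apply fmeet_glb; auto using fle_refl]. Qed.

Lemma top_le {F : Frame} (x : F) : fle ftop x -> x = ftop.
Proof. intros; apply fle_antisym; auto using ftop_max. Qed.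

Lemma sup_le_sup {F : Frame} (S S' : F -> Prop) :
  (forall x, S x -> exists y, S' y /\ fle x y) -> fle (fsup S) (fsup S').
Proof.
  intros H; apply fsup_lub; intros x Hx; destruct (H x Hx) as [y [Hy Hxy]].
  apply (fle_trans _ y); auto using fsup_ub.
Qed.

Lemma meet_sup_r {F : Frame} (S : F -> Prop) x :
  fmeet (fsup S) x = fsup (img (fun s => fmeet s x) S).
Proof.
  rewrite meetC, fdistr; f_equal.
  apply functional_extensionality; intro z; apply propositional_extensionality.
  split; intros [s [Hs ->]]; exists s; rewrite meetC; auto.
Qed.

Lemma eq_of_upper_bounds {F : Frame} (x y : F) : (forall z, fle x z <-> fle y z) -> x = y.
Proof. intros H; apply fle_antisym; apply H, fle_refl. Qed.

Lemma img_comp {X Y Z : Type} (f : X -> Y) (g : Y -> Z) (S : X -> Prop) :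
  img g (img f S) = img (fun x => g (f x)) S.
Proof.
  apply functional_extensionality; intro z; apply propositional_extensionality; split.
  - intros [y [[x [Hx ->]] ->]]; exists x; auto.
  - intros [x [Hx ->]]; exists (f x); split; auto; exists x; auto.
Qed.

Lemma img_id {X : Type} (S : X -> Prop) : img (fun x => x) S = S.
Proof.
  apply functional_extensionality; intro z; apply propositional_extensionality; split.
  - intros [x [Hx ->]]; auto.
  - intros Hz; exists z; auto.
Qed.

Section FrameHom.
Context {A B : Frame} (f : A -> B) (Hf : frame_hom f).

Lemma hom_top : f ftop = ftop.
Proof. apply Hf. Qed.

Lemma hom_meet x y : f (fmeet x y) = fmeet (f x) (f y).
Proof. apply Hf. Qed.

Lemma hom_sup S : f (fsup S) = fsup (img f S).
Proof. apply Hf. Qed.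

Lemma hom_mono x y : fle x y -> fle (f x) (f y).
Proof. intros Hxy; rewrite <- (meet_l Hxy), hom_meet; apply fmeet_lb2. Qed.

End FrameHom.

Lemma hom_id (A : Frame) : frame_hom (fun x : A => x).
Proof. split; [|split]; auto; intros S; rewrite img_id; auto. Qed.

Lemma hom_comp (A B C : Frame) (f : A -> B) (g : B -> C) :
  frame_hom f -> frame_hom g -> frame_hom (fun x => g (f x)).
Proof.
  intros Hf Hg; split; [|split]; intros.
  - rewrite (hom_top Hf); apply (hom_top Hg).
  - rewrite (hom_meet Hf), (hom_meet Hg); auto.
  - rewrite (hom_sup Hf), (hom_sup Hg), img_comp; auto.
Qed.

Definition has_left_adjoint {A B : Frame} (f : A -> B) : Prop :=
  forall x y, fle (left_adj f x) y <-> fle x (f y).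

Lemma left_adj_eq {A B : Frame} (f : A -> B) (L : B -> A) :
  (forall x y, fle (L x) y <-> fle x (f y)) -> forall x, left_adj f x = L x.
Proof.
  intros H x; apply fle_antisym.
  - apply fsup_lub; intros z Hz; apply Hz, H, fle_refl.
  - apply fsup_ub; intros s Hs; apply H, Hs.
Qed.

Section LeftAdjoint.
Context {A B : Frame} (f : A -> B) (Hadj : has_left_adjoint f).

Lemma left_adj_unit x : fle x (f (left_adj f x)).
Proof. apply Hadj, fle_refl. Qed.

Lemma left_adj_counit y : fle (left_adj f (f y)) y.
Proof. apply Hadj, fle_refl. Qed.

Lemma left_adj_mono x y : fle x y -> fle (left_adj f x) (left_adj f y).
Proof. intros; apply Hadj; apply (fle_trans _ y); auto using left_adj_unit. Qed.

Lemma left_adj_sup S : left_adj f (fsup S) = fsup (img (left_adj f) S).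
Proof.
  apply fle_antisym.
  - apply Hadj, fsup_lub; intros x Hx; apply Hadj, fsup_ub; exists x; auto.
  - apply fsup_lub; intros y [x [Hx ->]]; apply left_adj_mono, fsup_ub, Hx.
Qed.

End LeftAdjoint.

(** * Tensor products and pushouts of frames *)

Section Tensor.
Context {A B C : Frame} (al : A -> B) (be : A -> C).

(* The pushout [B ⊗_A C] is presented by the relations closed under these rules (the
   "C-ideals" of Joyal and Tierney); [tensor_gen x y] is the basic element [x ⊗ y]. *)
Definition tensor_closed (S : B -> C -> Prop) : Prop :=
  (forall x y x' y', S x y -> fle x' x -> fle y' y -> S x' y') /\
  (forall X y, (forall x, X x -> S x y) -> S (fsup X) y) /\
  (forall x Y, (forall y, Y y -> S x y) -> S x (fsup Y)) /\
  (forall x a y, S x (fmeet (be a) y) <-> S (fmeet (al a) x) y).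

Definition tensor_closure (P : B -> C -> Prop) (x : B) (y : C) : Prop :=
  forall T, tensor_closed T -> (forall x' y', P x' y' -> T x' y') -> T x y.

Lemma closure_incl P x y : P x y -> tensor_closure P x y.
Proof. intros H T _ HT; auto. Qed.

Lemma closure_min P T :
  tensor_closed T -> (forall x y, P x y -> T x y) -> forall x y, tensor_closure P x y -> T x y.
Proof. intros HT H x y Hc; apply Hc; auto. Qed.

Lemma closure_closed P : tensor_closed (tensor_closure P).
Proof.
  split; [|split; [|split]].
  - intros x y x' y' H Hx Hy T HT HP; apply (proj1 HT x y); [apply H | ..]; auto.
  - intros X y H T HT HP; apply (proj1 (proj2 HT)); intros x Hx; apply H; auto.
  - intros x Y H T HT HP; apply (proj1 (proj2 (proj2 HT))); intros y Hy; apply H; auto.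
  - intros x a y; split; intros H T HT HP; apply (proj2 (proj2 (proj2 HT))), H; auto.
Qed.

Lemma closed_meet S S' :
  tensor_closed S -> tensor_closed S' -> tensor_closed (fun x y => S x y /\ S' x y).
Proof.
  intros [Sd [Sl [Sr Ss]]] [Sd' [Sl' [Sr' Ss']]]; split; [|split; [|split]].
  - intros x y x' y' [H H'] Hx Hy; split; eauto.
  - intros X y H; split; [apply Sl | apply Sl']; intros x Hx; apply H, Hx.
  - intros x Y H; split; [apply Sr | apply Sr']; intros y Hy; apply H, Hy.
  - intros x a y; rewrite Ss, Ss'; tauto.
Qed.

Lemma closed_restrict J p q :
  tensor_closed J -> tensor_closed (fun x y => J (fmeet x p) (fmeet y q)).
Proof.
  intros [Jd [Jl [Jr Js]]]; split; [|split; [|split]].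
  - intros x y x' y' H Hx Hy; apply (Jd _ _ _ _ H); apply leI2; auto using fle_refl.
  - intros X y H; rewrite meet_sup_r; apply Jl; intros z [x [Hx ->]]; auto.
  - intros x Y H; rewrite meet_sup_r; apply Jr; intros z [y [Hy ->]]; auto.
  - intros x a y; rewrite <- !meetA; apply Js.
Qed.

Lemma closure_meet_ind P Q J :
  tensor_closed J -> (forall x y x' y', P x y -> Q x' y' -> J (fmeet x x') (fmeet y y')) ->
  forall x y, tensor_closure P x y -> tensor_closure Q x y -> J x y.
Proof.
  intros HJ H x y HP HQ.
  enough (Hc : forall x y, tensor_closure P x y -> forall x' y', tensor_closure Q x' y' ->
                 J (fmeet x x') (fmeet y y'))
    by (rewrite <- (meetxx x), <- (meetxx y); auto).
  intros x0 y0 HP0 x' y' HQ'; revert x0 y0 HP0.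
  apply (closure_min (closed_restrict x' y' HJ)); intros x0 y0 Hp.
  rewrite (meetC x0), (meetC y0); revert x' y' HQ'.
  apply (closure_min (closed_restrict x0 y0 HJ)); intros x' y' Hq.
  rewrite (meetC x'), (meetC y'); auto.
Qed.

Definition tensor_car := {S : B -> C -> Prop | tensor_closed S}.

Definition trel (S : tensor_car) : B -> C -> Prop := proj1_sig S.

Lemma tensor_ext (S S' : tensor_car) : (forall x y, trel S x y <-> trel S' x y) -> S = S'.
Proof.
  destruct S as [S HS], S' as [S' HS']; simpl; intro H.
  assert (S = S') as ->.
  { apply functional_extensionality; intro x; apply functional_extensionality; intro y.
    apply propositional_extensionality; auto. }
  f_equal; apply proof_irrelevance.
Qed.

Definition tsup (Fm : tensor_car -> Prop) : tensor_car :=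
  exist _ (tensor_closure (fun x y => exists S, Fm S /\ trel S x y)) (closure_closed _).

Definition tmeet (S S' : tensor_car) : tensor_car :=
  exist _ (fun x y => trel S x y /\ trel S' x y) (closed_meet (proj2_sig S) (proj2_sig S')).

Lemma ttop_closed : tensor_closed (fun _ _ => True).
Proof. split; [|split; [|split]]; intros; tauto. Qed.

Definition ttop : tensor_car := exist _ (fun _ _ => True) ttop_closed.

Lemma trel_down (S : tensor_car) x y x' y' : trel S x y -> fle x' x -> fle y' y -> trel S x' y'.
Proof. apply (proj1 (proj2_sig S)). Qed.

Lemma trel_sup_l (S : tensor_car) X y : (forall x, X x -> trel S x y) -> trel S (fsup X) y.
Proof. apply (proj1 (proj2 (proj2_sig S))). Qed.

Lemma trel_sup_r (S : tensor_car) x Y : (forall y, Y y -> trel S x y) -> trel S x (fsup Y).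
Proof. apply (proj1 (proj2 (proj2 (proj2_sig S)))). Qed.

Lemma trel_balanced (S : tensor_car) x a y :
  trel S x (fmeet (be a) y) <-> trel S (fmeet (al a) x) y.
Proof. apply (proj2 (proj2 (proj2 (proj2_sig S)))). Qed.

Lemma tmeet_tsup S Fm : tmeet S (tsup Fm) = tsup (img (tmeet S) Fm).
Proof.
  apply tensor_ext; intros x y; simpl; split.
  - intros [H1 H2].
    refine (closure_meet_ind (closure_closed _) _ (closure_incl H1) H2).
    intros x0 y0 x' y' Hxy [S' [HS' Hxy']]; apply closure_incl.
    exists (tmeet S S'); split; [exists S'; auto |].
    split; [apply (trel_down Hxy) | apply (trel_down Hxy')];
      auto using fmeet_lb1, fmeet_lb2.
  - intros H; split; revert x y H.
    + apply (closure_min (proj2_sig S)); intros x y [_ [[S' [_ ->]] [HS _]]]; auto.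
    + apply (closure_min (closure_closed _)).
      intros x y [_ [[S' [HS' ->]] [_ HS]]]; apply closure_incl; eauto.
Qed.

Definition tensor : Frame.
Proof.
  refine (@Build_Frame tensor_car (fun S S' => forall x y, trel S x y -> trel S' x y)
            tsup tmeet ttop _ _ _ _ _ _ _ _ _ tmeet_tsup).
  - auto.
  - auto.
  - intros; apply tensor_ext; split; auto.
  - intros Fm S HS x y H; apply closure_incl; eauto.
  - intros Fm S H x y; apply (closure_min (proj2_sig S)).
    intros x' y' [S' [HS' H']]; exact (H S' HS' x' y' H').
  - intros S S' x y [H _]; auto.
  - intros S S' x y [_ H]; auto.
  - intros S1 S2 S3 H1 H2 x y H; split; auto.
  - intros S x y _; exact I.
Defined.

Definition tensor_gen (x : B) (y : C) : tensor :=
  exist _ (tensor_closure (fun x' y' => x' = x /\ y' = y)) (closure_closed _).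

Lemma tensor_gen_le x y (S : tensor) : fle (tensor_gen x y) S <-> trel S x y.
Proof.
  split.
  - intros H; apply H, closure_incl; auto.
  - intros H u v; apply (closure_min (proj2_sig S)); intros x' y' [-> ->]; auto.
Qed.

Lemma tensor_gen_mono x y x' y' : fle x x' -> fle y y' -> fle (tensor_gen x y) (tensor_gen x' y').
Proof.
  intros; apply tensor_gen_le, (trel_down (S := tensor_gen x' y') (x := x') (y := y')); auto.
  apply tensor_gen_le, fle_refl.
Qed.

Lemma tensor_gen_meet x y x' y' :
  fmeet (tensor_gen x y) (tensor_gen x' y') = tensor_gen (fmeet x x') (fmeet y y').
Proof.
  apply fle_antisym.
  - intros u v [H H'].
    refine (closure_meet_ind (closure_closed _) _ H H').
    intros ? ? ? ? [-> ->] [-> ->]; apply closure_incl; auto.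
  - apply fmeet_glb; apply tensor_gen_mono; auto using fmeet_lb1, fmeet_lb2.
Qed.

Definition tensor_in1 (x : B) : tensor := tensor_gen x ftop.
Definition tensor_in2 (y : C) : tensor := tensor_gen ftop y.

Lemma tensor_gen_in x y : tensor_gen x y = fmeet (tensor_in1 x) (tensor_in2 y).
Proof. unfold tensor_in1, tensor_in2; rewrite tensor_gen_meet, meetx1, meet1x; auto. Qed.

Lemma tensor_gen_top : tensor_gen ftop ftop = ftop.
Proof.
  apply top_le; intros x y _.
  apply (trel_down (S := tensor_gen ftop ftop) (x := ftop) (y := ftop)); auto using ftop_max.
  apply tensor_gen_le, fle_refl.
Qed.

Lemma tensor_in1_hom : frame_hom tensor_in1.
Proof.
  split; [|split].
  - apply tensor_gen_top.
  - intros; unfold tensor_in1; rewrite tensor_gen_meet, meetxx; auto.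
  - intros X; apply fle_antisym.
    + apply tensor_gen_le, trel_sup_l; intros x Hx; apply closure_incl.
      exists (tensor_in1 x); split; [exists x; auto | apply tensor_gen_le, fle_refl].
    + apply fsup_lub; intros S [x [Hx ->]]; apply tensor_gen_mono; auto using fsup_ub, fle_refl.
Qed.

Lemma tensor_in2_hom : frame_hom tensor_in2.
Proof.
  split; [|split].
  - apply tensor_gen_top.
  - intros; unfold tensor_in2; rewrite tensor_gen_meet, meetxx; auto.
  - intros Y; apply fle_antisym.
    + apply tensor_gen_le, trel_sup_r; intros y Hy; apply closure_incl.
      exists (tensor_in2 y); split; [exists y; auto | apply tensor_gen_le, fle_refl].
    + apply fsup_lub; intros S [y [Hy ->]]; apply tensor_gen_mono; auto using fsup_ub, fle_refl.
Qed.

Lemma tensor_in_balanced a : tensor_in1 (al a) = tensor_in2 (be a).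
Proof.
  unfold tensor_in1, tensor_in2; apply fle_antisym; apply tensor_gen_le.
  - rewrite <- (meetx1 (al a)); apply trel_balanced; rewrite meetx1; apply tensor_gen_le, fle_refl.
  - rewrite <- (meetx1 (be a)); apply trel_balanced; rewrite meetx1; apply tensor_gen_le, fle_refl.
Qed.

Lemma tensor_decomp (S : tensor) :
  S = fsup (fun T => exists x y, trel S x y /\ T = tensor_gen x y).
Proof.
  apply fle_antisym.
  - intros x y H; apply closure_incl; exists (tensor_gen x y).
    split; [eauto | apply tensor_gen_le, fle_refl].
  - apply fsup_lub; intros T [x [y [H ->]]]; apply tensor_gen_le, H.
Qed.

Section Lift.
Context {F : Frame} (h1 : B -> F) (h2 : C -> F).
Hypotheses (Hh1 : frame_hom h1) (Hh2 : frame_hom h2) (Hbal : forall a, h1 (al a) = h2 (be a)).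

Definition tensor_lift (S : tensor) : F :=
  fsup (fun z => exists x y, trel S x y /\ z = fmeet (h1 x) (h2 y)).

Lemma lift_below_closed w : tensor_closed (fun x y => fle (fmeet (h1 x) (h2 y)) w).
Proof.
  split; [|split; [|split]].
  - intros x y x' y' H Hx Hy; apply (fle_trans _ _ _ (leI2 (hom_mono Hh1 Hx) (hom_mono Hh2 Hy)) H).
  - intros X y H; rewrite (hom_sup Hh1), meet_sup_r.
    apply fsup_lub; intros z [s [[x [Hx ->]] ->]]; auto.
  - intros x Y H; rewrite (hom_sup Hh2), fdistr.
    apply fsup_lub; intros z [s [[y [Hy ->]] ->]]; auto.
  - intros x a y; rewrite (hom_meet Hh1), (hom_meet Hh2), Hbal.
    replace (fmeet (h1 x) (fmeet (h2 (be a)) (h2 y)))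
      with (fmeet (fmeet (h2 (be a)) (h1 x)) (h2 y)) by meet_ac; tauto.
Qed.

Lemma tensor_lift_le S w :
  fle (tensor_lift S) w <-> forall x y, trel S x y -> fle (fmeet (h1 x) (h2 y)) w.
Proof.
  split.
  - intros H x y Hxy; refine (fle_trans _ _ _ _ H); apply fsup_ub; eauto.
  - intros H; apply fsup_lub; intros z [x [y [Hxy ->]]]; auto.
Qed.

Lemma tensor_lift_gen x y : tensor_lift (tensor_gen x y) = fmeet (h1 x) (h2 y).
Proof.
  apply fle_antisym.
  - apply tensor_lift_le, (closure_min (lift_below_closed _)); intros ? ? [-> ->]; apply fle_refl.
  - apply fsup_ub; exists x, y; split; auto; apply tensor_gen_le, fle_refl.
Qed.

Lemma tensor_lift_hom : frame_hom tensor_lift.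
Proof.
  split; [|split].
  - rewrite <- tensor_gen_top, tensor_lift_gen, (hom_top Hh1), (hom_top Hh2), meetxx; auto.
  - intros S S'; apply fle_antisym.
    + apply fmeet_glb; apply sup_le_sup; intros z [x [y [[H H'] ->]]];
        exists (fmeet (h1 x) (h2 y)); split; eauto using fle_refl.
    + unfold tensor_lift; rewrite meet_sup_r; apply fsup_lub; intros z [s [[x [y [Hxy ->]]] ->]].
      rewrite fdistr; apply fsup_lub; intros z [s [[x' [y' [Hxy' ->]]] ->]].
      apply fsup_ub; exists (fmeet x x'), (fmeet y y'); split.
      * split; [apply (trel_down Hxy) | apply (trel_down Hxy')]; auto using fmeet_lb1, fmeet_lb2.
      * rewrite (hom_meet Hh1), (hom_meet Hh2); meet_ac.
  - intros Fm; apply fle_antisym.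
    + apply tensor_lift_le, (closure_min (lift_below_closed _)); intros x y [S [HS Hxy]].
      apply (fle_trans _ (tensor_lift S)); [apply fsup_ub; eauto | apply fsup_ub; exists S; auto].
    + apply fsup_lub; intros z [S [HS ->]]; apply tensor_lift_le; intros x y Hxy.
      apply fsup_ub; exists x, y; split; auto; apply closure_incl; eauto.
Qed.

Lemma tensor_lift_in1 x : tensor_lift (tensor_in1 x) = h1 x.
Proof. unfold tensor_in1; rewrite tensor_lift_gen, (hom_top Hh2), meetx1; auto. Qed.

Lemma tensor_lift_in2 y : tensor_lift (tensor_in2 y) = h2 y.
Proof. unfold tensor_in2; rewrite tensor_lift_gen, (hom_top Hh1), meet1x; auto. Qed.

Lemma tensor_lift_unique (h : tensor -> F) : frame_hom h ->
  (forall x, h (tensor_in1 x) = h1 x) -> (forall y, h (tensor_in2 y) = h2 y) ->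
  forall S, h S = tensor_lift S.
Proof.
  intros Hh E1 E2 S; rewrite (tensor_decomp S) at 1; rewrite (hom_sup Hh).
  apply fle_antisym; apply sup_le_sup.
  - intros z [T [[x [y [Hxy ->]]] ->]]; exists (fmeet (h1 x) (h2 y)); split; [eauto |].
    rewrite tensor_gen_in, (hom_meet Hh), E1, E2; apply fle_refl.
  - intros z [x [y [Hxy ->]]]; exists (h (tensor_gen x y)).
    split; [exists (tensor_gen x y); eauto |].
    rewrite tensor_gen_in, (hom_meet Hh), E1, E2; apply fle_refl.
Qed.

End Lift.

Lemma tensor_hom_ext {F : Frame} (h h' : tensor -> F) : frame_hom h -> frame_hom h' ->
  (forall x, h (tensor_in1 x) = h' (tensor_in1 x)) ->
  (forall y, h (tensor_in2 y) = h' (tensor_in2 y)) -> forall S, h S = h' S.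
Proof.
  intros Hh Hh' E1 E2 S.
  rewrite (tensor_lift_unique Hh E1 E2).
  rewrite (tensor_lift_unique Hh' (fun _ => eq_refl) (fun _ => eq_refl)); auto.
Qed.

End Tensor.

Section Pushout.
Context {A B C P : Frame} {al : A -> B} {be : A -> C} {p1 : B -> P} {p2 : C -> P}.
Hypothesis Hpo : is_pushout al be p1 p2.

Lemma pushout_hom1 : frame_hom p1. Proof. apply Hpo. Qed.
Lemma pushout_hom2 : frame_hom p2. Proof. apply Hpo. Qed.
Lemma pushout_balanced a : p1 (al a) = p2 (be a). Proof. apply Hpo. Qed.

Lemma pushout_universal {F : Frame} (h1 : B -> F) (h2 : C -> F) :
  frame_hom h1 -> frame_hom h2 -> (forall a, h1 (al a) = h2 (be a)) ->
  exists h : P -> F, frame_hom h /\ (forall x, h (p1 x) = h1 x) /\ (forall y, h (p2 y) = h2 y).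
Proof.
  intros H1 H2 Hb.
  destruct (proj2 (proj2 (proj2 Hpo)) F h1 h2 H1 H2 Hb) as [h [Hh [E1 [E2 _]]]]; eauto.
Qed.

Lemma pushout_hom_ext {F : Frame} (h h' : P -> F) : frame_hom h -> frame_hom h' ->
  (forall x, h (p1 x) = h' (p1 x)) -> (forall y, h (p2 y) = h' (p2 y)) -> forall w, h w = h' w.
Proof.
  intros Hh Hh' E1 E2 w.
  assert (Hb : forall a, h' (p1 (al a)) = h' (p2 (be a)))
    by (intros; rewrite pushout_balanced; auto).
  destruct (proj2 (proj2 (proj2 Hpo)) F _ _
              (hom_comp pushout_hom1 Hh') (hom_comp pushout_hom2 Hh') Hb)
    as [k [_ [_ [_ Hk]]]].
  rewrite (Hk h), (Hk h'); auto.
Qed.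

Lemma pushout_tensor_iso : exists h : P -> tensor al be,
  (forall w x y, trel (h w) x y <-> fle (fmeet (p1 x) (p2 y)) w) /\
  (forall w, tensor_lift p1 p2 (h w) = w) /\ (forall S, h (tensor_lift p1 p2 S) = S).
Proof.
  pose proof (tensor_lift_hom pushout_hom1 pushout_hom2 pushout_balanced) as Hl.
  destruct (pushout_universal (tensor_in1_hom al be) (tensor_in2_hom al be)
              (tensor_in_balanced al be))
    as [h [Hh [E1 E2]]].
  assert (Hlh : forall w, tensor_lift p1 p2 (h w) = w).
  { apply (pushout_hom_ext (hom_comp Hh Hl) (hom_id P)); intros.
    - rewrite E1; apply (tensor_lift_in1 pushout_hom1 pushout_hom2 pushout_balanced).
    - rewrite E2; apply (tensor_lift_in2 pushout_hom1 pushout_hom2 pushout_balanced). }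
  assert (Hhl : forall S, h (tensor_lift p1 p2 S) = S).
  { apply (tensor_hom_ext (hom_comp Hl Hh) (hom_id _)); intros.
    - rewrite (tensor_lift_in1 pushout_hom1 pushout_hom2 pushout_balanced); auto.
    - rewrite (tensor_lift_in2 pushout_hom1 pushout_hom2 pushout_balanced); auto. }
  exists h; split; [| split; auto]; intros w x y; split; intros H.
  - rewrite <- (Hlh w), <- (tensor_lift_gen pushout_hom1 pushout_hom2 pushout_balanced).
    apply (hom_mono Hl), tensor_gen_le, H.
  - apply tensor_gen_le; rewrite tensor_gen_in, <- E1, <- E2, <- (hom_meet Hh).
    apply (hom_mono Hh), H.
Qed.

Lemma pushout_decomp w :
  w = fsup (fun z => exists x y, fle (fmeet (p1 x) (p2 y)) w /\ z = fmeet (p1 x) (p2 y)).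
Proof.
  destruct pushout_tensor_iso as [h [Hmem [Hlh _]]].
  rewrite <- (Hlh w) at 1; unfold tensor_lift; f_equal.
  apply functional_extensionality; intro z; apply propositional_extensionality.
  split; intros [x [y [H ->]]]; exists x, y; split; auto; apply Hmem, H.
Qed.

Lemma pushout_ind (S : B -> C -> Prop) : tensor_closed al be S -> forall x y,
  fle (fmeet (p1 x) (p2 y)) (fsup (fun z => exists x' y', S x' y' /\ z = fmeet (p1 x') (p2 y'))) ->
  S x y.
Proof.
  intros HS x y H; destruct pushout_tensor_iso as [h [Hmem [_ Hhl]]].
  change (fsup _) with (tensor_lift p1 p2 (exist _ S HS : tensor al be)) in H.
  apply Hmem in H; rewrite Hhl in H; exact H.
Qed.

(* Chosen by [epsilon]: meaningless unless [h1] and [h2] are homomorphisms agreeing on [A]. *)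
Definition copair {F : Frame} (h1 : B -> F) (h2 : C -> F) : P -> F :=
  epsilon (inhabits (fun _ => ftop))
    (fun h => frame_hom h /\ (forall x, h (p1 x) = h1 x) /\ (forall y, h (p2 y) = h2 y)).

Section Copair.
Context {F : Frame} (h1 : B -> F) (h2 : C -> F).
Hypotheses (Hh1 : frame_hom h1) (Hh2 : frame_hom h2) (Hbal : forall a, h1 (al a) = h2 (be a)).

Lemma copair_spec :
  frame_hom (copair h1 h2) /\ (forall x, copair h1 h2 (p1 x) = h1 x) /\
  (forall y, copair h1 h2 (p2 y) = h2 y).
Proof. unfold copair; apply epsilon_spec, pushout_universal; auto. Qed.

Lemma copair_hom : frame_hom (copair h1 h2). Proof. apply copair_spec. Qed.
Lemma copair_p1 x : copair h1 h2 (p1 x) = h1 x. Proof. apply copair_spec. Qed.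
Lemma copair_p2 y : copair h1 h2 (p2 y) = h2 y. Proof. apply copair_spec. Qed.

Lemma copair_unique (h : P -> F) : frame_hom h ->
  (forall x, h (p1 x) = h1 x) -> (forall y, h (p2 y) = h2 y) -> forall w, h w = copair h1 h2 w.
Proof.
  intros Hh E1 E2; apply (pushout_hom_ext Hh copair_hom); intros;
    rewrite ?E1, ?E2, ?copair_p1, ?copair_p2; auto.
Qed.

End Copair.

Lemma copair_natural {F F' : Frame} (h1 : B -> F) (h2 : C -> F) (f : F -> F') :
  frame_hom h1 -> frame_hom h2 -> (forall a, h1 (al a) = h2 (be a)) -> frame_hom f ->
  forall w, f (copair h1 h2 w) = copair (fun x => f (h1 x)) (fun y => f (h2 y)) w.
Proof.
  intros Hh1 Hh2 Hbal Hf; apply copair_unique; intros; rewrite ?copair_p1, ?copair_p2; auto.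
  - apply (hom_comp Hh1 Hf).
  - apply (hom_comp Hh2 Hf).
  - rewrite Hbal; auto.
  - apply (hom_comp (copair_hom Hh1 Hh2 Hbal) Hf).
Qed.

Lemma copair_id w : copair p1 p2 w = w.
Proof.
  symmetry; apply (copair_unique pushout_hom1 pushout_hom2 pushout_balanced (hom_id P)); auto.
Qed.

End Pushout.

Arguments copair {B C P} p1 p2 {F} h1 h2.

(** * Base change of open maps *)

Section OpenPullback.
Context {A B C : Frame} (al : A -> B) (be : A -> C).
Hypotheses (Hal : open_map al) (Hbe : frame_hom be).

Lemma below_in2_closed c : tensor_closed al be (fun x y => fle (fmeet y (be (left_adj al x))) c).
Proof.
  split; [|split; [|split]].
  - intros x y x' y' H Hx Hy; refine (fle_trans _ _ _ _ H).
    apply leI2, (hom_mono Hbe), (left_adj_mono (proj1 Hal)); auto.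
  - intros X y H; rewrite (left_adj_sup (proj1 Hal)), (hom_sup Hbe), img_comp, fdistr.
    apply fsup_lub; intros z [s [[x [Hx ->]] ->]]; auto.
  - intros x Y H; rewrite meet_sup_r; apply fsup_lub; intros z [y [Hy ->]]; auto.
  - intros x a y; rewrite (meetC (al a) x), (proj2 Hal), (hom_meet Hbe).
    replace (fmeet (fmeet (be a) y) (be (left_adj al x)))
      with (fmeet y (fmeet (be (left_adj al x)) (be a))) by meet_ac; tauto.
Qed.

Lemma trel_in2 c x y : trel (tensor_in2 al be c) x y <-> fle (fmeet y (be (left_adj al x))) c.
Proof.
  split.
  - apply (closure_min (below_in2_closed c)); intros ? ? [-> ->]; apply fmeet_lb1.
  - intros H; apply (trel_down (x := fmeet (al (left_adj al x)) ftop) (y := y)).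
    + apply trel_balanced, (trel_down (x := ftop) (y := c));
        [apply tensor_gen_le, fle_refl | apply fle_refl |].
      rewrite meetC; apply H.
    + rewrite meetx1; apply (left_adj_unit (proj1 Hal)).
    + apply fle_refl.
Qed.

Definition in2_direct_image (S : tensor al be) : C :=
  fsup (fun z => exists x y, trel S x y /\ z = fmeet y (be (left_adj al x))).

Lemma in2_direct_image_adj S c : fle (in2_direct_image S) c <-> fle S (tensor_in2 al be c).
Proof.
  split.
  - intros H x y Hxy; apply trel_in2; refine (fle_trans _ _ _ _ H); apply fsup_ub; eauto.
  - intros H; apply fsup_lub; intros z [x [y [Hxy ->]]]; apply trel_in2, H, Hxy.
Qed.

Lemma tensor_in2_open : open_map (tensor_in2 al be).
Proof.
  pose proof (left_adj_eq in2_direct_image_adj) as E.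
  split; intros S c; rewrite !E; [apply in2_direct_image_adj |].
  apply fle_antisym.
  - apply fmeet_glb.
    + apply sup_le_sup; intros z [x [y [[Hxy _] ->]]]; eexists; split; [eauto | apply fle_refl].
    + apply in2_direct_image_adj, fmeet_lb2.
  - unfold in2_direct_image at 1; rewrite meet_sup_r.
    apply fsup_lub; intros z [s [[x [y [Hxy ->]]] ->]].
    apply (fle_trans _ (fmeet (fmeet y c) (be (left_adj al x)))); [meet_le_ac |].
    apply fsup_ub; exists x, (fmeet y c); split; auto; split.
    + apply (trel_down Hxy); auto using fle_refl, fmeet_lb1.
    + apply trel_in2; meet_le_ac.
Qed.

End OpenPullback.

Lemma open_map_iso {X Y Z : Frame} (q : X -> Y) (phi : Y -> Z) (psi : Z -> Y) (m : X -> Z) :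
  open_map q -> frame_hom phi -> frame_hom psi ->
  (forall w, phi (psi w) = w) -> (forall t, psi (phi t) = t) ->
  (forall x, m x = phi (q x)) -> open_map m.
Proof.
  intros [Hq Hfrob] Hphi Hpsi E1 E2 Em.
  assert (Hadj : forall w x, fle (left_adj q (psi w)) x <-> fle w (m x)).
  { intros w x; rewrite Hq, Em; split; intros H.
    - rewrite <- (E1 w); apply (hom_mono Hphi), H.
    - rewrite <- (E2 (q x)); apply (hom_mono Hpsi), H. }
  pose proof (left_adj_eq Hadj) as E.
  split; intros; rewrite !E; [apply Hadj |].
  rewrite (hom_meet Hpsi), Em, E2, Hfrob; auto.
Qed.

Section BeckChevalley.
Context {A B B' C P : Frame} {al : A -> B} {be : A -> C} {p1 : B -> P} {p2 : C -> P}.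
Hypothesis Hpo : is_pushout al be p1 p2.
Context (f : B -> B') (Hf : open_map f) (K : P -> tensor (fun a => f (al a)) be).
Hypotheses (HK : frame_hom K) (HK1 : forall x, K (p1 x) = tensor_in1 _ _ (f x))
  (HK2 : forall y, K (p2 y) = tensor_in2 _ _ y).

Lemma direct_image_below_closed v :
  tensor_closed (fun a => f (al a)) be (fun w z => fle (fmeet (p1 (left_adj f w)) (p2 z)) v).
Proof.
  pose proof (pushout_hom1 Hpo) as Hp1; pose proof (pushout_hom2 Hpo) as Hp2.
  split; [|split; [|split]].
  - intros w z w' z' H Hw Hz; refine (fle_trans _ _ _ _ H).
    apply leI2; [apply (hom_mono Hp1), (left_adj_mono (proj1 Hf)), Hw | apply (hom_mono Hp2), Hz].
  - intros W z H; rewrite (left_adj_sup (proj1 Hf)), (hom_sup Hp1), meet_sup_r, !img_comp.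
    apply fsup_lub; intros t [w [Hw ->]]; auto.
  - intros w Z H; rewrite (hom_sup Hp2), fdistr.
    apply fsup_lub; intros t [s [[z [Hz ->]] ->]]; auto.
  - intros w a z; rewrite (meetC (f (al a)) w), (proj2 Hf), !(hom_meet Hp1), !(hom_meet Hp2),
      (pushout_balanced Hpo).
    replace (fmeet (fmeet (p1 (left_adj f w)) (p2 (be a))) (p2 z))
      with (fmeet (p1 (left_adj f w)) (fmeet (p2 (be a)) (p2 z))) by meet_ac; tauto.
Qed.

(* Beck-Chevalley for [K = f ⊗ 1 : B ⊗_A C -> B' ⊗_A C] with [f] open: the direct image
   along [K] sends [w ⊗ z] to [p1 (f_! w) /\ p2 z].  Only this inequality is needed. *)
Lemma pushout_beck_chevalley w z v :
  fle (tensor_gen _ _ w z) (K v) -> fle (fmeet (p1 (left_adj f w)) (p2 z)) v.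
Proof.
  intros H; apply (proj1 (tensor_gen_le w z (exist _ _ (direct_image_below_closed v)))).
  refine (fle_trans _ _ _ H _).
  rewrite (pushout_decomp Hpo v) at 1; rewrite (hom_sup HK).
  apply fsup_lub; intros t [s [[x [y [Hxy ->]]] ->]].
  rewrite (hom_meet HK), HK1, HK2, <- tensor_gen_in; apply tensor_gen_le.
  refine (fle_trans _ _ _ _ Hxy).
  apply leI2; [apply (hom_mono (pushout_hom1 Hpo)) | apply fle_refl].
  apply (left_adj_counit (proj1 Hf)).
Qed.

End BeckChevalley.

(** * Generalized arrows of a localic groupoid *)

Section Groupoid.
Variable G : LGData.
Hypothesis HG : is_localic_groupoid G.

Local Notation D := (dst G).
Local Notation R := (rst G).
Local Notation U := (ust G).
Local Notation I := (ist G).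
Local Notation M := (mst G).
Local Notation P1 := (pi1 G).
Local Notation P2 := (pi2 G).

Lemma dst_hom : frame_hom D. Proof. apply HG. Qed.
Lemma rst_hom : frame_hom R. Proof. apply HG. Qed.
Lemma ust_hom : frame_hom U. Proof. apply HG. Qed.
Lemma ist_hom : frame_hom I. Proof. apply HG. Qed.
Lemma mst_hom : frame_hom M. Proof. apply HG. Qed.
Lemma arrows_pushout : is_pushout R D P1 P2. Proof. apply HG. Qed.
Lemma ust_dst a : U (D a) = a. Proof. apply HG. Qed.
Lemma ust_rst a : U (R a) = a. Proof. apply HG. Qed.
Lemma mst_dst a : M (D a) = P1 (D a). Proof. apply HG. Qed.
Lemma mst_rst a : M (R a) = P2 (R a). Proof. apply HG. Qed.
Lemma ist_dst a : I (D a) = R a. Proof. apply HG. Qed.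
Lemma ist_rst a : I (R a) = D a. Proof. apply HG. Qed.

Lemma unit_l_axiom (h : G2 G -> G1 G) : frame_hom h ->
  (forall x, h (P1 x) = D (U x)) -> (forall x, h (P2 x) = x) -> forall x, h (M x) = x.
Proof. apply HG. Qed.

Lemma unit_r_axiom (h : G2 G -> G1 G) : frame_hom h ->
  (forall x, h (P1 x) = x) -> (forall x, h (P2 x) = R (U x)) -> forall x, h (M x) = x.
Proof. apply HG. Qed.

Lemma inv_r_axiom (h : G2 G -> G1 G) : frame_hom h ->
  (forall x, h (P1 x) = x) -> (forall x, h (P2 x) = I x) -> forall x, h (M x) = D (U x).
Proof. apply HG. Qed.

Lemma inv_l_axiom (h : G2 G -> G1 G) : frame_hom h ->
  (forall x, h (P1 x) = I x) -> (forall x, h (P2 x) = x) -> forall x, h (M x) = R (U x).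
Proof. apply HG. Qed.

Lemma assoc_axiom (F : Frame) (g1 g2 g3 : G1 G -> F) :
  frame_hom g1 -> frame_hom g2 -> frame_hom g3 ->
  (forall a, g1 (R a) = g2 (D a)) -> (forall a, g2 (R a) = g3 (D a)) ->
  forall h12 h23 k l : G2 G -> F,
    frame_hom h12 -> frame_hom h23 -> frame_hom k -> frame_hom l ->
    (forall x, h12 (P1 x) = g1 x) -> (forall x, h12 (P2 x) = g2 x) ->
    (forall x, h23 (P1 x) = g2 x) -> (forall x, h23 (P2 x) = g3 x) ->
    (forall x, k (P1 x) = h12 (M x)) -> (forall x, k (P2 x) = g3 x) ->
    (forall x, l (P1 x) = g1 x) -> (forall x, l (P2 x) = h23 (M x)) ->
    forall x, k (M x) = l (M x).
Proof. apply HG. Qed.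

Lemma pi1_hom : frame_hom P1. Proof. exact (pushout_hom1 arrows_pushout). Qed.
Lemma pi2_hom : frame_hom P2. Proof. exact (pushout_hom2 arrows_pushout). Qed.
Lemma pi_balanced a : P1 (R a) = P2 (D a). Proof. exact (pushout_balanced arrows_pushout a). Qed.

(* A frame homomorphism [a : G1 G -> F] is a generalized arrow of [G].  [gmul a b] is the
   composite "first [a], then [b]", defined when [composable a b], i.e. r a = d b. *)
Definition composable {F : Frame} (a b : G1 G -> F) : Prop := forall x, a (R x) = b (D x).

Definition gmul {F : Frame} (a b : G1 G -> F) : G1 G -> F := fun x => copair P1 P2 a b (M x).
Definition ginv {F : Frame} (a : G1 G -> F) : G1 G -> F := fun x => a (I x).
Definition gid_dom {F : Frame} (a : G1 G -> F) : G1 G -> F := fun x => a (D (U x)).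
Definition gid_cod {F : Frame} (a : G1 G -> F) : G1 G -> F := fun x => a (R (U x)).

Lemma gmul_hom {F : Frame} (a b : G1 G -> F) :
  frame_hom a -> frame_hom b -> composable a b -> frame_hom (gmul a b).
Proof. intros; apply (hom_comp mst_hom), (copair_hom arrows_pushout); auto. Qed.

Lemma ginv_hom {F : Frame} (a : G1 G -> F) : frame_hom a -> frame_hom (ginv a).
Proof. apply (hom_comp ist_hom). Qed.

Lemma gid_dom_hom {F : Frame} (a : G1 G -> F) : frame_hom a -> frame_hom (gid_dom a).
Proof. apply (hom_comp (hom_comp ust_hom dst_hom)). Qed.

Lemma gmul_dst {F : Frame} (a b : G1 G -> F) : frame_hom a -> frame_hom b -> composable a b ->
  forall x, gmul a b (D x) = a (D x).
Proof. intros; unfold gmul; rewrite mst_dst, (copair_p1 arrows_pushout); auto. Qed.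

Lemma gmul_rst {F : Frame} (a b : G1 G -> F) : frame_hom a -> frame_hom b -> composable a b ->
  forall x, gmul a b (R x) = b (R x).
Proof. intros; unfold gmul; rewrite mst_rst, (copair_p2 arrows_pushout); auto. Qed.

Lemma gmul_natural {F F' : Frame} (f : F -> F') (a b : G1 G -> F) :
  frame_hom f -> frame_hom a -> frame_hom b -> composable a b ->
  (fun x => f (gmul a b x)) = gmul (fun x => f (a x)) (fun x => f (b x)).
Proof.
  intros; apply functional_extensionality; intro x; apply (copair_natural arrows_pushout); auto.
Qed.

Lemma composable_gmul_l {F : Frame} (a b c : G1 G -> F) :
  frame_hom a -> frame_hom b -> composable a b -> composable b c ->
  composable (gmul a b) c.
Proof. intros Ha Hb Hab Hbc x; rewrite gmul_rst; auto. Qed.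

Lemma composable_gmul_r {F : Frame} (a b c : G1 G -> F) :
  frame_hom b -> frame_hom c -> composable a b -> composable b c ->
  composable a (gmul b c).
Proof. intros Hb Hc Hab Hbc x; rewrite gmul_dst; auto. Qed.

Lemma composable_ginv_r {F : Frame} (a : G1 G -> F) : composable a (ginv a).
Proof. intros x; unfold ginv; rewrite ist_dst; auto. Qed.

Lemma composable_ginv_l {F : Frame} (a : G1 G -> F) : composable (ginv a) a.
Proof. intros x; unfold ginv; rewrite ist_rst; auto. Qed.

Lemma composable_ginv {F : Frame} (a b : G1 G -> F) :
  composable a b -> composable (ginv b) (ginv a).
Proof. intros Hab x; unfold ginv; rewrite ist_rst, ist_dst; auto. Qed.

Lemma composable_gid_dom {F : Frame} (a : G1 G -> F) : composable (gid_dom a) a.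
Proof. intros x; unfold gid_dom; rewrite ust_rst; auto. Qed.

Lemma composable_gid_cod {F : Frame} (a : G1 G -> F) : composable a (gid_cod a).
Proof. intros x; unfold gid_cod; rewrite ust_dst; auto. Qed.

Lemma gid_dom_ginv {F : Frame} (a : G1 G -> F) : gid_dom (ginv a) = gid_cod a.
Proof.
  apply functional_extensionality; intro x; unfold gid_dom, gid_cod, ginv; rewrite ist_dst; auto.
Qed.

Lemma gid_cod_ginv {F : Frame} (a : G1 G -> F) : gid_cod (ginv a) = gid_dom a.
Proof.
  apply functional_extensionality; intro x; unfold gid_dom, gid_cod, ginv; rewrite ist_rst; auto.
Qed.

Lemma gid_cod_dom {F : Frame} (a b : G1 G -> F) : composable a b -> gid_cod a = gid_dom b.
Proof. intros Hab; apply functional_extensionality; intro x; apply Hab. Qed.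

Lemma gid_dom_gmul {F : Frame} (a b : G1 G -> F) :
  frame_hom a -> frame_hom b -> composable a b -> gid_dom (gmul a b) = gid_dom a.
Proof. intros; apply functional_extensionality; intro x; apply gmul_dst; auto. Qed.

Lemma gid_cod_gmul {F : Frame} (a b : G1 G -> F) :
  frame_hom a -> frame_hom b -> composable a b -> gid_cod (gmul a b) = gid_cod b.
Proof. intros; apply functional_extensionality; intro x; apply gmul_rst; auto. Qed.

(* Every law is the image under [a] of the corresponding law for the generic arrow [fun x => x]. *)
Lemma gmul_generic {F : Frame} (a : G1 G -> F) (s t e : G1 G -> G1 G) :
  frame_hom a -> frame_hom s -> frame_hom t -> composable s t -> (forall x, gmul s t x = e x) ->
  gmul (fun x => a (s x)) (fun x => a (t x)) = (fun x => a (e x)).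
Proof.
  intros Ha Hs Ht Hst He; rewrite <- (gmul_natural Ha Hs Ht Hst).
  apply functional_extensionality; intro x; rewrite He; auto.
Qed.

Lemma gmul_id_l {F : Frame} (a : G1 G -> F) : frame_hom a -> gmul (gid_dom a) a = a.
Proof.
  intros Ha; pose proof (hom_comp ust_hom dst_hom) as Hs.
  pose proof (composable_gid_dom (fun x : G1 G => x)) as Hc.
  apply (gmul_generic Ha Hs (hom_id _) Hc).
  destruct (copair_spec arrows_pushout Hs (hom_id _) Hc) as (Hh & E1 & E2).
  apply unit_l_axiom; auto.
Qed.

Lemma gmul_id_r {F : Frame} (a : G1 G -> F) : frame_hom a -> gmul a (gid_cod a) = a.
Proof.
  intros Ha; pose proof (hom_comp ust_hom rst_hom) as Ht.
  pose proof (composable_gid_cod (fun x : G1 G => x)) as Hc.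
  apply (gmul_generic Ha (hom_id _) Ht Hc).
  destruct (copair_spec arrows_pushout (hom_id _) Ht Hc) as (Hh & E1 & E2).
  apply unit_r_axiom; auto.
Qed.

Lemma gmul_inv_r {F : Frame} (a : G1 G -> F) : frame_hom a -> gmul a (ginv a) = gid_dom a.
Proof.
  intros Ha; pose proof (composable_ginv_r (fun x : G1 G => x)) as Hc.
  apply (gmul_generic Ha (hom_id _) ist_hom Hc).
  destruct (copair_spec arrows_pushout (hom_id _) ist_hom Hc) as (Hh & E1 & E2).
  apply inv_r_axiom; auto.
Qed.

Lemma gmul_inv_l {F : Frame} (a : G1 G -> F) : frame_hom a -> gmul (ginv a) a = gid_cod a.
Proof.
  intros Ha; pose proof (composable_ginv_l (fun x : G1 G => x)) as Hc.
  apply (gmul_generic Ha ist_hom (hom_id _) Hc).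
  destruct (copair_spec arrows_pushout ist_hom (hom_id _) Hc) as (Hh & E1 & E2).
  apply inv_l_axiom; auto.
Qed.

Lemma gmul_assoc {F : Frame} (a b c : G1 G -> F) : frame_hom a -> frame_hom b -> frame_hom c ->
  composable a b -> composable b c -> gmul (gmul a b) c = gmul a (gmul b c).
Proof.
  intros Ha Hb Hc Hab Hbc; apply functional_extensionality; intro x.
  destruct (copair_spec arrows_pushout Ha Hb Hab) as (H12 & E12 & E12').
  destruct (copair_spec arrows_pushout Hb Hc Hbc) as (H23 & E23 & E23').
  destruct (copair_spec arrows_pushout (gmul_hom Ha Hb Hab) Hc (composable_gmul_l Ha Hb Hab Hbc))
    as (HK & EK & EK').
  destruct (copair_spec arrows_pushout Ha (gmul_hom Hb Hc Hbc) (composable_gmul_r Hb Hc Hab Hbc))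
    as (HL & EL & EL').
  apply (assoc_axiom Ha Hb Hc Hab Hbc H12 H23 HK HL); auto.
Qed.

Lemma ginvK {F : Frame} (a : G1 G -> F) : frame_hom a -> ginv (ginv a) = a.
Proof.
  intros Ha; pose proof (ginv_hom Ha) as Ha'; pose proof (ginv_hom Ha') as Ha''.
  rewrite <- (gmul_id_r Ha''), gid_cod_ginv, gid_dom_ginv, <- (gmul_inv_l Ha).
  rewrite <- (gmul_assoc Ha'' Ha' Ha (composable_ginv_l _) (composable_ginv_l _)).
  rewrite (gmul_inv_l Ha'), gid_cod_ginv; apply (gmul_id_l Ha).
Qed.

Lemma ginv_gmul {F : Frame} (a b : G1 G -> F) : frame_hom a -> frame_hom b -> composable a b ->
  ginv (gmul a b) = gmul (ginv b) (ginv a).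
Proof.
  intros Ha Hb Hab.
  pose proof (ginv_hom Ha) as Ha'; pose proof (ginv_hom Hb) as Hb'.
  pose proof (composable_ginv Hab) as Hb'a'.
  pose proof (gmul_hom Ha Hb Hab) as Hp; pose proof (ginv_hom Hp) as Hp'.
  pose proof (gmul_hom Hb' Ha' Hb'a') as Hx.
  assert (Ha'p : composable (ginv a) (gmul a b))
    by exact (composable_gmul_r Ha Hb (composable_ginv_l a) Hab).
  assert (Hxp : composable (gmul (ginv b) (ginv a)) (gmul a b))
    by exact (composable_gmul_l Hb' Ha' Hb'a' Ha'p).
  assert (Ecancel : gmul (gmul (ginv b) (ginv a)) (gmul a b) = gid_dom (ginv (gmul a b))).
  { rewrite (gmul_assoc Hb' Ha' Hp Hb'a' Ha'p).
    rewrite <- (gmul_assoc Ha' Ha Hb (composable_ginv_l a) Hab), (gmul_inv_l Ha).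
    rewrite (gid_cod_dom Hab), (gmul_id_l Hb), (gmul_inv_l Hb).
    rewrite gid_dom_ginv, (gid_cod_gmul Ha Hb Hab); auto. }
  symmetry; rewrite <- (gmul_id_r Hx), (gid_cod_gmul Hb' Ha' Hb'a'), gid_cod_ginv.
  rewrite <- (gid_dom_gmul Ha Hb Hab), <- (gmul_inv_r Hp).
  rewrite <- (gmul_assoc Hx Hp Hp' Hxp (composable_ginv_r _)), Ecancel; apply (gmul_id_l Hp').
Qed.

Lemma gmul_pi : gmul P1 P2 = M.
Proof. apply functional_extensionality; intro x; apply (copair_id arrows_pushout). Qed.

Lemma OG_reflexive : is_reflexive (G0 G) (G1 G) (OG_actL G) (OG_actR G) (OG_ups G).
Proof.
  split; [exact ust_hom |].
  intros a; unfold OG_ups, OG_actL, OG_actR; rewrite !meetx1, ust_dst, ust_rst; auto.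
Qed.

(** * The quantale of an open groupoid *)

Section OpenGroupoid.
Hypothesis Hd : open_map D.

Local Notation q1 := (tensor_in1 D D).
Local Notation q2 := (tensor_in2 D D).

Lemma composable_ginv_q1_q2 : composable (ginv q1) q2.
Proof. intros x; unfold ginv; rewrite ist_rst; apply tensor_in_balanced. Qed.

Lemma composable_q1_gmul : composable q1 (gmul (ginv q1) q2).
Proof.
  intros x; rewrite (gmul_dst (ginv_hom (tensor_in1_hom D D)) (tensor_in2_hom D D) composable_ginv_q1_q2).
  unfold ginv; rewrite ist_dst; auto.
Qed.

(* [shear] and [unshear] are the inverse images of the mutually inverse locale maps
   (g, h) |-> (g, g h) and (g, k) |-> (g, g^-1 k) between composable pairs and pairs of
   arrows with a common domain. *)
Definition shear : tensor D D -> G2 G := tensor_lift P1 M.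
Definition unshear : G2 G -> tensor D D := copair P1 P2 q1 (gmul (ginv q1) q2).

Lemma pi1_mst_balanced a : P1 (D a) = M (D a).
Proof. symmetry; apply mst_dst. Qed.

Lemma shear_hom : frame_hom shear.
Proof. exact (tensor_lift_hom pi1_hom mst_hom pi1_mst_balanced). Qed.

Lemma shear_q1 x : shear (q1 x) = P1 x.
Proof. exact (tensor_lift_in1 pi1_hom mst_hom pi1_mst_balanced x). Qed.

Lemma shear_q2 x : shear (q2 x) = M x.
Proof. exact (tensor_lift_in2 pi1_hom mst_hom pi1_mst_balanced x). Qed.

Lemma unshear_spec : frame_hom unshear /\ (forall x, unshear (P1 x) = q1 x) /\
  (forall y, unshear (P2 y) = gmul (ginv q1) q2 y).
Proof.
  apply (copair_spec arrows_pushout (tensor_in1_hom D D)); [| apply composable_q1_gmul].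
  apply (gmul_hom (ginv_hom (tensor_in1_hom D D)) (tensor_in2_hom D D) composable_ginv_q1_q2).
Qed.

Lemma shear_unshear w : shear (unshear w) = w.
Proof.
  destruct unshear_spec as (Hu & E1 & E2).
  apply (pushout_hom_ext arrows_pushout (hom_comp Hu shear_hom) (hom_id _)); intros x.
  - rewrite E1; apply shear_q1.
  - rewrite E2.
    change (shear (gmul (ginv q1) q2 x)) with ((fun y => shear (gmul (ginv q1) q2 y)) x).
    rewrite (gmul_natural shear_hom (ginv_hom (tensor_in1_hom D D)) (tensor_in2_hom D D)
               composable_ginv_q1_q2).
    replace (fun y => shear (ginv q1 y)) with (ginv P1)
      by (apply functional_extensionality; intro y; unfold ginv; rewrite shear_q1; auto).
    replace (fun y => shear (q2 y)) with (gmul P1 P2)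
      by (rewrite gmul_pi; apply functional_extensionality; intro y; rewrite shear_q2; auto).
    rewrite <- (gmul_assoc (ginv_hom pi1_hom) pi1_hom pi2_hom (composable_ginv_l _) pi_balanced).
    rewrite (gmul_inv_l pi1_hom), (gid_cod_dom pi_balanced), (gmul_id_l pi2_hom); auto.
Qed.

Lemma unshear_shear S : unshear (shear S) = S.
Proof.
  destruct unshear_spec as (Hu & E1 & E2).
  apply (tensor_hom_ext (hom_comp shear_hom Hu) (hom_id _)); intros x.
  - rewrite shear_q1; apply E1.
  - rewrite shear_q2, <- gmul_pi.
    change (unshear (gmul P1 P2 x)) with ((fun y => unshear (gmul P1 P2 y)) x).
    rewrite (gmul_natural Hu pi1_hom pi2_hom pi_balanced).
    replace (fun y => unshear (P1 y)) with q1 by (apply functional_extensionality; intro y; auto).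
    replace (fun y => unshear (P2 y)) with (gmul (ginv q1) q2)
      by (apply functional_extensionality; intro y; auto).
    pose proof (tensor_in1_hom D D) as Hq1; pose proof (tensor_in2_hom D D) as Hq2.
    rewrite <- (gmul_assoc Hq1 (ginv_hom Hq1) Hq2 (composable_ginv_r _) composable_ginv_q1_q2).
    rewrite (gmul_inv_r Hq1).
    replace (gid_dom q1) with (gid_dom q2)
      by (apply functional_extensionality; intro y; symmetry; apply tensor_in_balanced).
    rewrite (gmul_id_l Hq2); auto.
Qed.

Lemma mst_open : open_map M.
Proof.
  destruct unshear_spec as (Hu & _ & _).
  exact (open_map_iso (tensor_in2_open Hd dst_hom) shear_hom Hu shear_unshear unshear_shear
           (fun x => eq_sym (shear_q2 x))).
Qed.

Local Notation mul := (OG_mul G).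

Lemma mul_le x y z : fle (mul x y) z <-> fle (fmeet (P1 x) (P2 y)) (M z).
Proof. apply (proj1 mst_open). Qed.

Lemma mul_unit x y : fle (fmeet (P1 x) (P2 y)) (M (mul x y)).
Proof. apply mul_le, fle_refl. Qed.

Lemma mul_mono x y x' y' : fle x x' -> fle y y' -> fle (mul x y) (mul x' y').
Proof.
  intros; apply (left_adj_mono (proj1 mst_open)), leI2;
    [apply (hom_mono pi1_hom) | apply (hom_mono pi2_hom)]; auto.
Qed.

Lemma mul_sup_l S y : mul (fsup S) y = fsup (img (fun x => mul x y) S).
Proof.
  apply eq_of_upper_bounds; intros z; rewrite mul_le, (hom_sup pi1_hom), meet_sup_r, img_comp.
  split; intros H; apply fsup_lub; intros t [x [Hx ->]].
  - apply mul_le; refine (fle_trans _ _ _ _ H); apply fsup_ub; exists x; auto.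
  - apply mul_le; refine (fle_trans _ _ _ _ H); apply fsup_ub; exists x; auto.
Qed.

Lemma mul_sup_r x S : mul x (fsup S) = fsup (img (mul x) S).
Proof.
  apply eq_of_upper_bounds; intros z; rewrite mul_le, (hom_sup pi2_hom), fdistr, img_comp.
  split; intros H; apply fsup_lub; intros t [y [Hy ->]].
  - apply mul_le; refine (fle_trans _ _ _ _ H); apply fsup_ub; exists y; auto.
  - apply mul_le; refine (fle_trans _ _ _ _ H); apply fsup_ub; exists y; auto.
Qed.

Lemma mul_dst_l a x y : mul (fmeet (D a) x) y = fmeet (D a) (mul x y).
Proof.
  unfold OG_mul; rewrite (meetC (D a) (left_adj M _)), <- (proj2 mst_open).
  rewrite (hom_meet pi1_hom), mst_dst.
  f_equal; meet_ac.
Qed.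

Lemma mul_balanced a x y : mul (fmeet (R a) x) y = mul x (fmeet (D a) y).
Proof.
  unfold OG_mul; rewrite (hom_meet pi1_hom), (hom_meet pi2_hom), pi_balanced; f_equal; meet_ac.
Qed.

Lemma mul_rst_r a x y : fmeet (R a) (mul x y) = mul x (fmeet (R a) y).
Proof.
  unfold OG_mul; rewrite (meetC (R a) (left_adj M _)), <- (proj2 mst_open).
  rewrite (hom_meet pi2_hom), mst_rst.
  f_equal; meet_ac.
Qed.

(* [tensor (fun a => M (R a)) D] is the frame of composable triples G2 x_G0 G1, with the three
   arrows [tri1], [tri2], [tri3].  Beck-Chevalley for [m] evaluates [(x y) z] there, where
   the associativity axiom rewrites it into [x (y z)]. *)
Local Notation r1 := (tensor_in1 (fun a => M (R a)) D).
Local Notation tri3 := (tensor_in2 (fun a => M (R a)) D).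
Local Notation tri1 := (fun x => r1 (P1 x)).
Local Notation tri2 := (fun x => r1 (P2 x)).

Lemma tri_hom1 : frame_hom tri1. Proof. exact (hom_comp pi1_hom (tensor_in1_hom _ _)). Qed.
Lemma tri_hom2 : frame_hom tri2. Proof. exact (hom_comp pi2_hom (tensor_in1_hom _ _)). Qed.

Lemma tri_composable12 : composable tri1 tri2.
Proof. intros a; cbv beta; rewrite pi_balanced; auto. Qed.

Lemma tri_composable23 : composable tri2 tri3.
Proof. intros a; cbv beta; rewrite <- mst_rst; exact (tensor_in_balanced _ D a). Qed.

Lemma gmul_tri12 x : gmul tri1 tri2 x = r1 (M x).
Proof.
  symmetry; apply (copair_unique arrows_pushout tri_hom1 tri_hom2 tri_composable12); auto.
  apply tensor_in1_hom.
Qed.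

Lemma mul_assoc_le x y z : fle (mul (mul x y) z) (mul x (mul y z)).
Proof.
  pose proof (gmul_hom tri_hom1 tri_hom2 tri_composable12) as H12.
  pose proof (composable_gmul_l tri_hom1 tri_hom2 tri_composable12 tri_composable23) as H12_3.
  destruct (copair_spec arrows_pushout H12 (tensor_in2_hom _ _) H12_3) as (HK & HK1 & HK2).
  apply mul_le, (pushout_beck_chevalley arrows_pushout mst_open HK); auto.
  { intros u; rewrite HK1; apply gmul_tri12. }
  change (copair P1 P2 (gmul tri1 tri2) tri3 (M ?c)) with (gmul (gmul tri1 tri2) tri3 c).
  rewrite (gmul_assoc tri_hom1 tri_hom2 (tensor_in2_hom _ _) tri_composable12 tri_composable23).
  pose proof (composable_gmul_r tri_hom2 (tensor_in2_hom _ _) tri_composable12 tri_composable23)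
    as H1_23.
  destruct (copair_spec arrows_pushout tri_hom1
              (gmul_hom tri_hom2 (tensor_in2_hom _ _) tri_composable23) H1_23)
    as (HL & HL1 & HL2).
  destruct (copair_spec arrows_pushout tri_hom2 (tensor_in2_hom _ _) tri_composable23)
    as (H23 & H231 & H232).
  refine (fle_trans _ _ _ _ (hom_mono HL (mul_unit _ _))).
  rewrite (hom_meet HL), HL1, HL2; unfold gmul.
  refine (fle_trans _ _ _ _ (leI2 (fle_refl _) (hom_mono H23 (mul_unit _ _)))).
  rewrite (hom_meet H23), H231, H232, tensor_gen_in, (hom_meet (tensor_in1_hom _ _)), meetA.
  apply fle_refl.
Qed.

Lemma ist_involutive x : I (I x) = x.
Proof. exact (f_equal (fun f => f x) (ginvK (hom_id (G1 G)))). Qed.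

Lemma ist_le x y : fle (I x) y <-> fle x (I y).
Proof.
  split; intros H.
  - rewrite <- (ist_involutive x); apply (hom_mono ist_hom), H.
  - rewrite <- (ist_involutive y); apply (hom_mono ist_hom), H.
Qed.

(* The inverse image of the map (g, h) |-> (h^-1, g^-1) on composable pairs. *)
Definition swap : G2 G -> G2 G := copair P1 P2 (ginv P2) (ginv P1).

Lemma swap_composable : composable (ginv P2) (ginv P1).
Proof. exact (composable_ginv pi_balanced). Qed.

Lemma swap_spec : frame_hom swap /\ (forall x, swap (P1 x) = P2 (I x)) /\
  (forall y, swap (P2 y) = P1 (I y)).
Proof.
  exact (copair_spec arrows_pushout (ginv_hom pi2_hom) (ginv_hom pi1_hom) swap_composable).
Qed.

Lemma mst_ist x : M (I x) = swap (M x).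
Proof.
  pose proof (f_equal (fun f => f x) (ginv_gmul pi1_hom pi2_hom pi_balanced)) as E.
  cbv beta in E; unfold ginv at 1 in E; rewrite gmul_pi in E; exact E.
Qed.

Lemma swap_involutive w : swap (swap w) = w.
Proof.
  destruct swap_spec as (Hs & E1 & E2).
  apply (pushout_hom_ext arrows_pushout (hom_comp Hs Hs) (hom_id _)); intros x;
    rewrite ?E1, ?E2, ?E1, ?E2, ist_involutive; auto.
Qed.

Lemma ist_direct_image w : I (left_adj M w) = left_adj M (swap w).
Proof.
  destruct swap_spec as (Hs & E1 & E2).
  apply eq_of_upper_bounds; intros c.
  rewrite ist_le, !(proj1 mst_open), mst_ist; split; intros H.
  - rewrite <- (swap_involutive (M c)); apply (hom_mono Hs), H.
  - rewrite <- (swap_involutive w); apply (hom_mono Hs), H.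
Qed.

Lemma ist_mul x y : I (mul x y) = mul (I y) (I x).
Proof.
  destruct swap_spec as (Hs & E1 & E2).
  unfold OG_mul; rewrite ist_direct_image, (hom_meet Hs), E1, E2, meetC; auto.
Qed.

Lemma mul_assoc x y z : mul (mul x y) z = mul x (mul y z).
Proof.
  apply fle_antisym; [apply mul_assoc_le |].
  rewrite <- (ist_involutive (mul x (mul y z))), <- (ist_involutive (mul (mul x y) z)).
  apply (hom_mono ist_hom); rewrite !ist_mul; apply mul_assoc_le.
Qed.

(* The inverse images of the maps <u d, 1> and <1, i> : G1 -> G2. *)
Definition unitor : G2 G -> G1 G := copair P1 P2 (gid_dom (fun x => x)) (fun x => x).
Definition inverter : G2 G -> G1 G := copair P1 P2 (fun x => x) I.

Lemma unitor_spec : frame_hom unitor /\ (forall x, unitor (P1 x) = D (U x)) /\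
  (forall y, unitor (P2 y) = y).
Proof.
  exact (copair_spec arrows_pushout (gid_dom_hom (hom_id _)) (hom_id _) (composable_gid_dom _)).
Qed.

Lemma inverter_spec : frame_hom inverter /\ (forall x, inverter (P1 x) = x) /\
  (forall y, inverter (P2 y) = I y).
Proof. exact (copair_spec arrows_pushout (hom_id _) ist_hom (composable_ginv_r _)). Qed.

Lemma unitor_mst x : unitor (M x) = x.
Proof. exact (f_equal (fun f => f x) (gmul_id_l (hom_id (G1 G)))). Qed.

Lemma inverter_mst x : inverter (M x) = D (U x).
Proof. exact (f_equal (fun f => f x) (gmul_inv_r (hom_id (G1 G)))). Qed.

Lemma unitor_pi x y : unitor (fmeet (P1 x) (P2 y)) = fmeet (D (U x)) y.
Proof. destruct unitor_spec as (Hu & E1 & E2); rewrite (hom_meet Hu), E1, E2; auto. Qed.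

Lemma inverter_pi x y : inverter (fmeet (P1 x) (P2 y)) = fmeet x (I y).
Proof. destruct inverter_spec as (Hi & E1 & E2); rewrite (hom_meet Hi), E1, E2; auto. Qed.

Lemma unit_le_mul x y : fle (fmeet (D (U x)) y) (mul x y).
Proof.
  rewrite <- unitor_pi, <- (unitor_mst (mul x y)).
  apply (hom_mono (proj1 unitor_spec)), mul_unit.
Qed.

Lemma le_unit_mul_inv x : fle x (D (U (mul x (I x)))).
Proof.
  rewrite <- inverter_mst, <- (meetxx x) at 1; rewrite <- (ist_involutive x) at 2.
  rewrite <- inverter_pi; apply (hom_mono (proj1 inverter_spec)), mul_unit.
Qed.

Lemma mul_below_closed z : tensor_closed R D (fun x y => fle (mul x y) z).
Proof.
  split; [|split; [|split]].
  - intros x y x' y' H Hx Hy; exact (fle_trans _ _ _ (mul_mono Hx Hy) H).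
  - intros X y H; rewrite mul_sup_l; apply fsup_lub; intros t [x [Hx ->]]; auto.
  - intros x Y H; rewrite mul_sup_r; apply fsup_lub; intros t [y [Hy ->]]; auto.
  - intros x a y; rewrite mul_balanced; tauto.
Qed.

Lemma muA_radj_iff z x y :
  muA_radj (G0 G) (G1 G) mul (OG_actL G) (OG_actR G) z x y <-> fle (mul x y) z.
Proof.
  split.
  - intros H; apply (H _ (mul_below_closed z)); intros S [_ HS] x' y' Hxy.
    refine (fle_trans _ _ _ _ HS); apply fsup_ub; eauto.
  - intros Hxy T _ HT; apply (HT (fun x y => fle (mul x y) z)); auto.
    split; [apply mul_below_closed |].
    apply fsup_lub; intros t [x' [y' [H ->]]]; auto.
Qed.

Lemma OG_multiplicative : is_multiplicative (G0 G) (G1 G) mul (OG_actL G) (OG_actR G).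
Proof.
  intros Z x y; rewrite muA_radj_iff; split.
  - intros H T HT Hsub; apply (pushout_ind arrows_pushout HT).
    apply mul_le in H; refine (fle_trans _ _ _ H _).
    rewrite (hom_sup mst_hom); apply fsup_lub; intros t [z [Hz ->]].
    rewrite (pushout_decomp arrows_pushout (M z)) at 1; apply sup_le_sup.
    intros t [p [q [Hpq ->]]]; eexists.
    split; [exists p, q; split; [| reflexivity] | apply fle_refl].
    apply (Hsub _ (ex_intro _ z (conj Hz eq_refl))), muA_radj_iff, mul_le, Hpq.
  - intros H; apply (H _ (mul_below_closed _)); intros S [z [Hz ->]] x' y' Hxy.
    apply muA_radj_iff in Hxy; refine (fle_trans _ _ _ Hxy _); apply fsup_ub, Hz.
Qed.

Lemma OG_equivariant_support :
  is_equivariant_support (G0 G) (G1 G) mul (OG_inv G) (OG_actL G) (OG_supp G).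
Proof.
  pose proof (proj1 Hd) as Hadj.
  unfold is_equivariant_support, is_support, OG_supp, OG_actL, OG_inv.
  split; [split; [|split; [|split]] |].
  - apply (left_adj_sup Hadj).
  - apply top_le; rewrite <- (ust_dst (left_adj D ftop)), <- (hom_top ust_hom).
    apply (hom_mono ust_hom), (left_adj_unit Hadj).
  - intros x y; refine (fle_trans _ _ _ _ (unit_le_mul _ _)).
    apply leI2, fle_refl; apply (hom_mono dst_hom), Hadj, le_unit_mul_inv.
  - intros x; rewrite meetC; apply meet_l, (left_adj_unit Hadj).
  - intros a x; rewrite meetC, (proj2 Hd), meetC; auto.
Qed.

Lemma OG_based_quantal_frame :
  is_based_quantal_frame (G0 G) (G1 G) mul (OG_inv G) (OG_actL G) (OG_actR G).
Proof.
  unfold is_based_quantal_frame, is_AA_quantale, is_bimodule, is_involutive,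
    OG_actL, OG_actR, OG_inv.
  split; [split; [repeat split |] | split; [repeat split | split]].
  - intros; apply fdistr.
  - intros S q; rewrite (hom_sup dst_hom), meet_sup_r, img_comp; auto.
  - intros q S; rewrite (hom_sup rst_hom), meet_sup_r, img_comp; auto.
  - intros; apply fdistr.
  - intros m; rewrite (hom_top dst_hom); apply meet1x.
  - intros a b m; rewrite (hom_meet dst_hom); symmetry; apply meetA.
  - intros m; rewrite (hom_top rst_hom); apply meet1x.
  - intros a b m; rewrite (hom_meet rst_hom); meet_ac.
  - intros a b m; meet_ac.
  - repeat split; intros.
    + apply mul_assoc.
    + apply mul_sup_l.
    + apply mul_sup_r.
    + apply mul_dst_l.
    + apply mul_balanced.
    + apply mul_rst_r.
  - apply (hom_sup ist_hom).
  - apply ist_involutive.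
  - apply ist_mul.
  - intros a b x; rewrite !(hom_meet ist_hom), ist_dst, ist_rst; meet_ac.
  - intros a x y; meet_ac.
  - intros a x y; meet_ac.
Qed.

Lemma OG_unit_laws : unit_laws (G0 G) (G1 G) mul (OG_actL G) (OG_ups G).
Proof.
  intros a; unfold OG_ups, OG_actL; apply fle_antisym.
  - apply fsup_lub; intros t [x [y [Hle ->]]]; exact (fle_trans _ _ _ (unit_le_mul x y) Hle).
  - rewrite <- (unitor_mst a) at 1.
    rewrite (pushout_decomp arrows_pushout (M a)), (hom_sup (proj1 unitor_spec)).
    apply fsup_lub; intros t [s [[p [q [Hpq ->]]] ->]]; rewrite unitor_pi.
    apply fsup_ub; exists p, q; split; auto; apply mul_le, Hpq.
Qed.

Lemma OG_inverse_law : inverse_law (G0 G) (G1 G) mul (OG_inv G) (OG_actL G) (OG_ups G).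
Proof.
  intros a; unfold OG_ups, OG_actL, OG_inv; rewrite meetx1, <- inverter_mst.
  pose proof (proj1 inverter_spec) as Hi; apply fle_antisym.
  - rewrite (pushout_decomp arrows_pushout (M a)) at 1; rewrite (hom_sup Hi).
    apply fsup_lub; intros t [s [[p [q [Hpq ->]]] ->]]; rewrite inverter_pi.
    apply fsup_ub; exists p, (I q); split; auto; rewrite ist_involutive; apply mul_le, Hpq.
  - apply fsup_lub; intros t [x [y [Hle ->]]].
    rewrite <- (ist_involutive y) at 1; rewrite <- inverter_pi.
    apply (hom_mono Hi); refine (fle_trans _ _ _ (mul_unit _ _) _); apply (hom_mono mst_hom), Hle.
Qed.

End OpenGroupoid.
End Groupoid.

Theorem theorem5p13 (G : LGData) :
  open_groupoid G ->
  is_groupoid_quantale (G0 G) (G1 G) (OG_mul G) (OG_inv G)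
    (OG_actL G) (OG_actR G) (OG_supp G) (OG_ups G).
Proof.
  intros [HG Hd].
  split; [| split; [| split; [| split; [| split]]]].
  - exact (OG_multiplicative HG Hd).
  - exact (OG_equivariant_support HG Hd).
  - exact (OG_reflexive HG).
  - exact (OG_based_quantal_frame HG Hd).
  - exact (OG_unit_laws HG Hd).
  - exact (OG_inverse_law HG Hd).
Qed.
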